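(* Let $T$ be a real $n\times n$ orthogonal projection matrix (symmetric, $T^2=T$) of rank $k$ whose diagonal entries are all equal. Then for every $0<m<n$, every principal $m\times m$ submatrix $T'$ of $T$ satisfies $\operatorname{rank}(T')\ge m\cdot k/n$. *)

From mathcomp Require Import all_boot all_order all_algebra.
From mathcomp Require Import reals.
Set Implicit Arguments. Unset Strict Implicit. Unset Printing Implicit Defensive.

From mathcomp Require Import all_boot all_order all_algebra.
From mathcomp Require Import reals.

Set Implicit Arguments.
Unset Strict Implicit.
Unset Printing Implicit Defensive.

Import Order.TTheory GRing.Theory Num.Theory.
Local Open Scope ring_scope.

(* The trace of an idempotent matrix is its rank, so with d the common
   diagonal entry of T we get k = tr T = n d, and tr T' = m d = m k / n.
   The principal submatrix T' of the projection T is symmetric, and so is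
   I - T', which is the principal submatrix of the projection I - T and hence
   a Gram matrix G G^T.  If E is the orthogonal projection onto the row space
   of T', then E - T' = (E G) (E G)^T is positive semidefinite, whence
   tr T' <= tr E = rank E = rank T'. *)

Lemma mxtrace_idem (F : fieldType) n (E : 'M[F]_n) :
  E *m E = E -> \tr E = (\rank E)%:R.
Proof.
(* For a full-rank factorization E = C D, idempotence forces D C = 1. *)
move=> EE; have base := mulmx_base E.
set C := col_base E in base; set D := row_base E in base.
have DC : D *m C = 1%:M.
  have : C *m (D *m C - 1%:M) *m D = 0.
    by rewrite mulmxBr mulmx1 mulmxBl (mulmxA C D C) base -(mulmxA E) base EE subrr.
  move/eqP; rewrite mulmx_free_eq0 ?row_base_free // => /eqP DC1.
  have : (D *m C - 1%:M)^T *m C^T = 0 by rewrite -trmx_mul DC1 trmx0.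
  move/eqP; rewrite mulmx_free_eq0; last first.
    by rewrite /row_free mxrank_tr; exact: col_base_full.
  by rewrite trmx_eq0 subr_eq0 => /eqP.
by rewrite -{1}base mxtrace_mulC DC mxtrace1.
Qed.

Lemma mxtrace_const_diag (R : pzSemiRingType) n (A : 'M[R]_n) d :
  (forall i, A i i = d) -> \tr A = n%:R * d.
Proof.
move=> Ad; rewrite /mxtrace (eq_bigr _ (fun i _ => Ad i)).
by rewrite sumr_const card_ord mulr_natl.
Qed.

Section PrincipalSubmatrix.
Variables (R : comPzRingType) (n m : nat) (f : 'I_m -> 'I_n).

Lemma trmx_mxsub_sym (A : 'M[R]_n) : A^T = A -> (mxsub f f A)^T = mxsub f f A.
Proof. by move=> Asym; rewrite trmx_mxsub Asym. Qed.

Lemma mxsub_sym_idem (P : 'M[R]_n) :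
  P^T = P -> P *m P = P -> mxsub f f P = rowsub f P *m (rowsub f P)^T.
Proof. by move=> Psym PP; rewrite trmx_mxsub Psym -mxsub_mul PP. Qed.

Lemma mxsub1 : injective f -> mxsub f f (1%:M : 'M[R]_n) = 1%:M.
Proof. by move=> f_inj; apply/matrixP => i j; rewrite !mxE (inj_eq f_inj). Qed.

End PrincipalSubmatrix.

Section RealGram.
Variable R : realFieldType.

Lemma mulmx_trmx_diag m n (X : 'M[R]_(m, n)) i : (X *m X^T) i i = \sum_j X i j ^+ 2.
Proof. by rewrite !mxE; apply: eq_bigr => j _; rewrite mxE expr2. Qed.

Lemma mxtrace_mulmx_trmx_ge0 m n (X : 'M[R]_(m, n)) : 0 <= \tr (X *m X^T).
Proof.
apply: sumr_ge0 => i _; rewrite mulmx_trmx_diag.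
by apply: sumr_ge0 => j _; exact: sqr_ge0.
Qed.

Lemma mulmx_trmx_eq0 m n (X : 'M[R]_(m, n)) : X *m X^T = 0 -> X = 0.
Proof.
move=> XX0; apply/matrixP => i j; have := congr1 (fun M : 'M_m => M i i) XX0.
rewrite mulmx_trmx_diag mxE => /psumr_eq0P sq0.
have := sq0 (fun j _ => sqr_ge0 (X i j)) j isT.
by rewrite mxE => /eqP; rewrite sqrf_eq0 => /eqP.
Qed.

End RealGram.

Section SymmetricProjection.
Variables (R : realFieldType) (n : nat) (S : 'M[R]_n).
Hypothesis Ssym : S^T = S.

Local Notation E := (proj_mx S (kermx S)).

Lemma capmx_kermx_sym : (S :&: kermx S)%MS = 0.
Proof.
set X := (S :&: kermx S)%MS.
have /submxP [W XW] : (X <= S)%MS := capmxSl _ _.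
have XS : X *m S = 0 by apply/sub_kermxP; exact: capmxSr.
by apply: mulmx_trmx_eq0; rewrite {2}XW trmx_mul Ssym mulmxA XS mul0mx.
Qed.

Lemma addsmx_kermx_sym_full : (1%:M <= S + kermx S)%MS.
Proof.
apply: submx_full; rewrite /row_full mxrank_disjoint_sum ?capmx_kermx_sym //.
by rewrite mxrank_ker subnKC ?rank_leq_row.
Qed.

Lemma proj_kermx_sub : (E <= S)%MS.
Proof. by have := proj_mx_sub S (kermx S) 1%:M; rewrite mul1mx. Qed.

Lemma mulmx_proj_kermx : S *m E = S.
Proof. exact: proj_mx_id capmx_kermx_sym (submx_refl S). Qed.

Lemma proj_kermx_idem : E *m E = E.
Proof. exact: proj_mx_id capmx_kermx_sym proj_kermx_sub. Qed.

Lemma trmx_proj_kermx : E^T = E.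
Proof.
have ES0 : (1%:M - E) *m S = 0.
  apply/sub_kermxP; have := proj_mx_compl_sub addsmx_kermx_sym_full.
  by rewrite mul1mx.
have /submxP [W EW] := proj_kermx_sub.
have : (1%:M - E) *m E^T = 0 by rewrite {2}EW trmx_mul Ssym mulmxA ES0 mul0mx.
move/eqP; rewrite mulmxBl mul1mx subr_eq0 => /eqP ET.
have EETsym : (E *m E^T)^T = E *m E^T by rewrite trmx_mul trmxK.
by rewrite -[RHS]trmxK ET EETsym -ET.
Qed.

Lemma proj_kermx_mulmx : E *m S = S.
Proof. by apply: trmx_inj; rewrite trmx_mul trmx_proj_kermx Ssym mulmx_proj_kermx. Qed.

Lemma mxtrace_le_rank m (G : 'M[R]_(n, m)) :
  1%:M - S = G *m G^T -> \tr S <= (\rank S)%:R.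
Proof.
move=> IS; have gram : (E *m G) *m (E *m G)^T = E - S.
  rewrite trmx_mul trmx_proj_kermx mulmxA -(mulmxA E G) -IS.
  by rewrite mulmxBr mulmx1 mulmxBl proj_kermx_idem proj_kermx_mulmx mulmx_proj_kermx.
apply: (@le_trans _ _ (\tr E)).
  by rewrite -subr_ge0 -linearB /= -gram mxtrace_mulmx_trmx_ge0.
by rewrite mxtrace_idem ?proj_kermx_idem // ler_nat mxrankS ?proj_kermx_sub.
Qed.

End SymmetricProjection.

Theorem corollary4p12 (R : realType) (n k : nat) (T : 'M[R]_n) :
  T^T = T -> T *m T = T -> \rank T = k ->
  (forall i j : 'I_n, T i i = T j j) ->
  forall (m : nat), (0 < m)%N -> (m < n)%N ->
  forall f : 'I_m -> 'I_n, injective f ->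
    (m%:R * k%:R / n%:R : R) <= (\rank (mxsub f f T))%:R.
Proof.
move=> Tsym TT rkT Tdiag m m_gt0 mn f f_inj.
have n_gt0 : (0 < n)%N := ltn_trans m_gt0 mn.
pose d := T (Ordinal n_gt0) (Ordinal n_gt0).
have trT : k%:R = n%:R * d.
  by rewrite -rkT -mxtrace_idem //; apply: mxtrace_const_diag => i; exact: Tdiag.
have trS : \tr (mxsub f f T) = m%:R * d.
  by apply: mxtrace_const_diag => i; rewrite mxE (Tdiag _ (Ordinal n_gt0)).
have ITsym : (1%:M - T)^T = 1%:M - T by rewrite linearB /= trmx1 Tsym.
have ITidem : (1%:M - T) *m (1%:M - T) = 1%:M - T.
  by rewrite mulmxBr mulmx1 mulmxBl mul1mx TT subrr subr0.
have IS : 1%:M - mxsub f f T = rowsub f (1%:M - T) *m (rowsub f (1%:M - T))^T.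
  by rewrite -mxsub_sym_idem // raddfB /= mxsub1.
rewrite trT mulrCA [_ / _]mulrC mulKf ?pnatr_eq0 -?lt0n // -trS.
exact: (mxtrace_le_rank (trmx_mxsub_sym f Tsym) IS).
Qed.
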